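(* For any path $\omega\in\Omega$ that is CH-random for a computable precise forecasting system $\varphi$: $\big[\liminf_{n\to\infty}\varphi(\omega_{1:n}),\ \limsup_{n\to\infty}\varphi(\omega_{1:n})\big]\subseteq I_\textnormal{CH}(\omega).$
   Context: $\mathcal{X}=\{0,1\}$; $\Omega=\mathcal{X}^{\mathbb{N}}$ (paths); $\mathbb{S}=\bigcup_{n\ge0}\mathcal X^n$ (situations), $\omega_{1:n}=(\omega_1,\dots,\omega_n)$, $\omega_{1:0}$ the empty string. $\mathcal{I}$: nonempty closed intervals $I\subseteq[0,1]$. A forecasting system is $\varphi:\mathbb S\to\mathcal I$, $\underline\varphi=\min\varphi$, $\overline\varphi=\max\varphi$; precise if $\underline\varphi=\overline\varphi$ (then $\varphi(s)$ is identified with the number $\underline\varphi(s)$); an interval forecast $I$ is identified with the constant forecasting system $s\mapsto I$. $\varphi$ is computable if there are recursive $\underline q,\overline q:\mathbb S\times\mathbb N_0\to\mathbb Q$ with $|\underline\varphi(s)-\underline q(s,n)|<2^{-n}$ and $|\overline\varphi(s)-\overline q(s,n)|<2^{-n}$. A path $\omega$ is CH-random for $\varphi$ if for every recursive selection process $S:\mathbb S\to\{0,1\}$ with $\sum_{k=0}^{n-1}S(\omega_{1:k})\to\infty$: $\liminf_n \frac{\sum_{k<n}S(\omega_{1:k})[\omega_{k+1}-\underline\varphi(\omega_{1:k})]}{\sum_{k<n}S(\omega_{1:k})}\ge0$ and $\limsup_n \frac{\sum_{k<n}S(\omega_{1:k})[\omega_{k+1}-\overline\varphi(\omega_{1:k})]}{\sum_{k<n}S(\omega_{1:k})}\le0$.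 $\mathcal I_\textnormal{CH}(\omega)=\{I\in\mathcal I:\omega\text{ CH-random for }I\}$, $I_\textnormal{CH}(\omega)=\bigcap_{I\in\mathcal I_\textnormal{CH}(\omega)}I$. *)

From mathcomp Require Import all_boot all_order all_algebra.
From mathcomp Require Import all_classical all_reals all_analysis.
Set Implicit Arguments. Unset Strict Implicit. Unset Printing Implicit Defensive.
Import Order.TTheory GRing.Theory Num.Theory.
Local Open Scope ring_scope.
Local Open Scope classical_set_scope.

Inductive prcode : Type :=
| PZero
| PSucc
| PProj (i : nat)
| PComp (f : prcode) (gs : prcodes)
| PPrec (f g : prcode)
| PMin (f : prcode)
with prcodes : Type :=
| PNil
| PCons (c : prcode) (cs : prcodes).

Inductive preval : prcode -> list nat -> nat -> Prop :=
| ev_zero v : preval PZero v 0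
| ev_succ x v : preval PSucc (x :: v) x.+1
| ev_proj i v : (i < size v)%N -> preval (PProj i) v (nth 0%N v i)
| ev_comp f gs v ys y :
    prevals gs v ys -> preval f ys y -> preval (PComp f gs) v y
| ev_prec0 f g v y : preval f v y -> preval (PPrec f g) (0%N :: v) y
| ev_precS f g n v y z :
    preval (PPrec f g) (n :: v) y -> preval g (n :: y :: v) z ->
    preval (PPrec f g) (n.+1 :: v) z
| ev_min f v n :
    (forall m, (m < n)%N -> exists k, preval f (m :: v) k.+1) ->
    preval f (n :: v) 0 -> preval (PMin f) v n
with prevals : prcodes -> list nat -> list nat -> Prop :=
| evs_nil v : prevals PNil v [::]
| evs_cons c cs v y ys :
    preval c v y -> prevals cs v ys -> prevals (PCons c cs) v (y :: ys).

(* X = {0,1} is bool; a path omega = (omega_1, omega_2, ...) is nat -> bool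
   with omega_{k+1} = omega k; a situation is a finite sequence of bits. *)
Definition bpath := nat -> bool.
Definition situation := seq bool.

Definition wprefix (w : bpath) (n : nat) : situation := mkseq w n.

(* standard effective injective coding of situations by naturals:
   the binary numeral 1 s_1 s_2 ... s_n *)
Definition sit_code (s : situation) : nat :=
  foldl (fun acc (b : bool) => (2 * acc + b)%N) 1%N s.

Definition recursive_selection (S : situation -> bool) : Prop :=
  exists c : prcode, forall s, preval c [:: sit_code s] (nat_of_bool (S s)).

Definition recursive_sn (q : situation -> nat -> nat) : Prop :=
  exists c : prcode, forall s n, preval c [:: sit_code s; n] (q s n).

Definition recursive_sn_rat (q : situation -> nat -> rat) : Prop :=
  exists a b c : situation -> nat -> nat,
    [/\ recursive_sn a, recursive_sn b, recursive_sn c &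
        forall s n, q s n = ((a s n)%:Q - (b s n)%:Q) / ((c s n).+1)%:Q].

Record interval (R : realType) := Interval {
  ilo : R; ihi : R;
  ilo_ge0 : 0 <= ilo; ilo_le_ihi : ilo <= ihi; ihi_le1 : ihi <= 1 }.

Definition forecasting_system (R : realType) := situation -> interval R.

Definition flo (R : realType) (phi : forecasting_system R) (s : situation) : R :=
  ilo (phi s).
Definition fhi (R : realType) (phi : forecasting_system R) (s : situation) : R :=
  ihi (phi s).

Definition precise (R : realType) (phi : forecasting_system R) : Prop :=
  forall s, flo phi s = fhi phi s.

Definition const_fs (R : realType) (I : interval R) : forecasting_system R :=
  fun _ => I.

Definition computable_fs (R : realType) (phi : forecasting_system R) : Prop :=
  exists ql qh : situation -> nat -> rat,
    [/\ recursive_sn_rat ql, recursive_sn_rat qh,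
        forall s n, `|flo phi s - ratr (ql s n)| < 2%:R ^- n &
        forall s n, `|fhi phi s - ratr (qh s n)| < 2%:R ^- n].

Definition sel_count (S : situation -> bool) (w : bpath) (n : nat) : nat :=
  (\sum_(k < n) S (wprefix w k))%N.

Definition sel_avg (R : realType) (S : situation -> bool) (w : bpath)
    (f : situation -> R) (n : nat) : R :=
  (\sum_(k < n) (S (wprefix w k))%:R * ((w k)%:R - f (wprefix w k)))
    / (sel_count S w n)%:R.

Definition CH_random (R : realType) (phi : forecasting_system R) (w : bpath) : Prop :=
  forall S : situation -> bool, recursive_selection S ->
    (forall M : nat, exists n, (M <= sel_count S w n)%N) ->
    0 <= limn_inf (sel_avg S w (flo phi)) /\
    limn_sup (sel_avg S w (fhi phi)) <= 0.

Definition I_CH (R : realType) (w : bpath) : set R :=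
  [set x | forall I : interval R, CH_random (const_fs I) w ->
             ilo I <= x <= ihi I].

(* Suppose lim sup phi(omega_{1:n}) exceeds the upper end of an interval I for
   which omega is CH-random.  Pick N with 2^-N = e small and a rational r with
   sup I + e < r < lim sup - e, and select the situations s whose computable
   approximation q(s, N) of phi(s) exceeds r.  This selection rule is
   recursive, it fires infinitely often (whenever phi > r + e), and on every
   selected situation phi exceeds sup I by the fixed gap r - e - sup I.  Along
   it, CH-randomness for phi keeps the lim inf of the averages of
   omega_{k+1} - phi nonnegative, while CH-randomness for I keeps the lim sup
   of the averages of omega_{k+1} - sup I nonpositive, and the gap makes these
   incompatible.  The lower bound is symmetric; there precision of phi lets its
   upper forecast play the role of its lower one. *)

From Pilot Require Import Defs.
From mathcomp Require Import all_boot all_order all_algebra.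
From mathcomp Require Import all_classical all_reals all_analysis.
From mathcomp Require Import lra.
Import Order.TTheory GRing.Theory Num.Theory.

Definition computable1 (h : nat -> nat) : Prop :=
  exists c : prcode, forall n, preval c [:: n] (h n).

Definition computable2 (h : nat -> nat -> nat) : Prop :=
  exists c : prcode, forall m n, preval c [:: m; n] (h m n).

Definition recursive_s (f : situation -> nat) : Prop :=
  exists c : prcode, forall s, preval c [:: sit_code s] (f s).

Lemma preval_proj0 x v : preval (PProj 0) (x :: v) x.
Proof. exact: (@ev_proj 0 (x :: v)). Qed.

Lemma preval_proj1 x y v : preval (PProj 1) (x :: y :: v) y.
Proof. exact: (@ev_proj 1 (x :: y :: v)). Qed.

Lemma preval_proj2 x y z v : preval (PProj 2) (x :: y :: z :: v) z.
Proof. exact: (@ev_proj 2 (x :: y :: z :: v)). Qed.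

Lemma preval_comp1 f g v y z :
  preval g v y -> preval f [:: y] z -> preval (PComp f (PCons g PNil)) v z.
Proof. by move=> hg; apply: ev_comp; apply: evs_cons hg (evs_nil _). Qed.

Lemma preval_comp2 f g1 g2 v y1 y2 z :
  preval g1 v y1 -> preval g2 v y2 -> preval f [:: y1; y2] z ->
  preval (PComp f (PCons g1 (PCons g2 PNil))) v z.
Proof.
move=> h1 h2; apply: ev_comp.
by apply: evs_cons h1 _; apply: evs_cons h2 (evs_nil _).
Qed.

Lemma preval_const k : exists c, forall v, preval c v k.
Proof.
elim: k => [|k [c hc]]; first by exists PZero; apply: ev_zero.
exists (PComp PSucc (PCons c PNil)) => v.
exact: preval_comp1 (hc v) (ev_succ _ _).
Qed.

Lemma computable1_pred : computable1 predn.
Proof.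
exists (PPrec PZero (PProj 0)); elim=> [|n IH]; first exact/ev_prec0/ev_zero.
exact: ev_precS IH (preval_proj0 _ _).
Qed.

Lemma computable1_gt0 : computable1 (fun n => (0 < n)%N : nat).
Proof.
exists (PPrec PZero (PComp PSucc (PCons PZero PNil))).
elim=> [|n IH] /=; first exact/ev_prec0/ev_zero.
apply: ev_precS IH _; exact: preval_comp1 (ev_zero _) (ev_succ _ _).
Qed.

Lemma computable2_add : computable2 addn.
Proof.
exists (PPrec (PProj 0) (PComp PSucc (PCons (PProj 1) PNil))).
elim=> [|m IH] n; first exact/ev_prec0/preval_proj0.
apply: ev_precS (IH n) _; rewrite addSn.
exact: preval_comp1 (preval_proj1 _ _ _) (ev_succ _ _).
Qed.

Lemma computable2_mul : computable2 muln.
Proof.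
have [cadd hadd] := computable2_add.
exists (PPrec PZero (PComp cadd (PCons (PProj 1) (PCons (PProj 2) PNil)))).
elim=> [|m IH] n; first exact/ev_prec0/ev_zero.
apply: ev_precS (IH n) _; rewrite mulSn addnC.
exact: preval_comp2 (preval_proj1 _ _ _) (preval_proj2 _ _ _ _) (hadd _ _).
Qed.

Lemma computable2_subr : computable2 (fun m n => n - m)%N.
Proof.
have [cpred hpred] := computable1_pred.
exists (PPrec (PProj 0) (PComp cpred (PCons (PProj 1) PNil))).
elim=> [|m IH] n; first by rewrite subn0; exact/ev_prec0/preval_proj0.
apply: ev_precS (IH n) _; rewrite subnS.
exact: preval_comp1 (preval_proj1 _ _ _) (hpred _).
Qed.

Lemma computable2_ltn : computable2 (fun m n => (m < n)%N : nat).
Proof.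
have [cgt0 hgt0] := computable1_gt0; have [csub hsub] := computable2_subr.
exists (PComp cgt0 (PCons csub PNil)) => m n; rewrite -subn_gt0.
exact: preval_comp1 (hsub _ _) (hgt0 _).
Qed.

Lemma eq_recursive_s {f g : situation -> nat} :
  recursive_s f -> f =1 g -> recursive_s g.
Proof. by move=> [c hc] fg; exists c => s; rewrite -fg. Qed.

Lemma recursive_s_const k : recursive_s (fun=> k).
Proof. by have [c hc] := preval_const k; exists c. Qed.

Lemma recursive_s_comp2 {h : nat -> nat -> nat} {f g : situation -> nat} :
  computable2 h -> recursive_s f -> recursive_s g ->
  recursive_s (fun s => h (f s) (g s)).
Proof.
move=> [ch hh] [cf hf] [cg hg].
by exists (PComp ch (PCons cf (PCons cg PNil))) => s; apply: preval_comp2.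
Qed.

Lemma recursive_sD {f g : situation -> nat} :
  recursive_s f -> recursive_s g -> recursive_s (fun s => f s + g s)%N.
Proof. exact: recursive_s_comp2 computable2_add. Qed.

Lemma recursive_sM {f g : situation -> nat} :
  recursive_s f -> recursive_s g -> recursive_s (fun s => f s * g s)%N.
Proof. exact: recursive_s_comp2 computable2_mul. Qed.

Lemma recursive_sS {f : situation -> nat} :
  recursive_s f -> recursive_s (fun s => (f s).+1).
Proof.
move=> rf; apply: eq_recursive_s (recursive_sD rf (recursive_s_const 1)) _.
by move=> s; rewrite addn1.
Qed.

Lemma recursive_sn_at (q : situation -> nat -> nat) N :
  recursive_sn q -> recursive_s (q ^~ N).
Proof.
move=> [cq hq]; have [cN hN] := preval_const N.
by exists (PComp cq (PCons (PProj 0) (PCons cN PNil))) => s;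
  apply: preval_comp2 (preval_proj0 _ _) (hN _) (hq s N).
Qed.

Local Open Scope ring_scope.

Definition recursive_s_rat (x : situation -> rat) : Prop :=
  exists a b c : situation -> nat,
    [/\ recursive_s a, recursive_s b, recursive_s c &
        forall s, x s = ((a s)%:Q - (b s)%:Q) / ((c s).+1)%:Q].

Lemma recursive_sn_rat_at {q : situation -> nat -> rat} N :
  recursive_sn_rat q -> recursive_s_rat (q ^~ N).
Proof.
move=> [a [b [c [ra rb rc Dq]]]].
by exists (a ^~ N), (b ^~ N), (c ^~ N); split; try exact: recursive_sn_at.
Qed.

Lemma recursive_s_rat_const (r : rat) : recursive_s_rat (fun=> r).
Proof.
have [a [b Dnum]] : exists a b : nat, numq r = a%:Z - b%:Z.
  case: (numq r) => n; first by exists n, 0%N; rewrite subr0.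
  by exists 0%N, n.+1; rewrite NegzE sub0r.
have Dden : denq r = (`|denq r|.-1).+1%:Z.
  by rewrite prednK ?absz_gt0 ?denq_neq0 // gez0_abs // ltW // denq_gt0.
exists (fun=> a), (fun=> b), (fun=> `|denq r|.-1); split; try exact: recursive_s_const.
by move=> _; rewrite -{1}(divq_num_den r) Dnum {1}Dden rmorphB.
Qed.

(* Cross-multiplied, with both sides moved so that no subtraction occurs. *)
Lemma ltq_frac (a b c a' b' c' : nat) :
  ((a%:Q - b%:Q) / c.+1%:Q < (a'%:Q - b'%:Q) / c'.+1%:Q) =
  (a * c'.+1 + b' * c.+1 < a' * c.+1 + b * c'.+1)%N.
Proof.
rewrite ltr_pdivrMr ?ltr0n // mulrAC ltr_pdivlMr ?ltr0n // !mulrBl -!pmulrn.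
by rewrite ltrBlDr addrAC ltrBrDr -!natrM -!natrD ltr_nat.
Qed.

Lemma recursive_selection_ltq {x y : situation -> rat} :
  recursive_s_rat x -> recursive_s_rat y -> recursive_selection (fun s => x s < y s).
Proof.
move=> [a [b [c [ra rb rc Dx]]]] [a' [b' [c' [ra' rb' rc' Dy]]]].
have lhs_rec :=
  recursive_sD (recursive_sM ra (recursive_sS rc')) (recursive_sM rb' (recursive_sS rc)).
have rhs_rec :=
  recursive_sD (recursive_sM ra' (recursive_sS rc)) (recursive_sM rb (recursive_sS rc')).
apply: eq_recursive_s (recursive_s_comp2 computable2_ltn lhs_rec rhs_rec) _.
by move=> s; rewrite /= Dx Dy ltq_frac.
Qed.

Local Open Scope classical_set_scope.

Definition frequently (P : nat -> Prop) : Prop :=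
  forall M, exists2 n, (M <= n)%N & P n.

Section limn_sup_inf_bounds.
Context {R : realType} {u : R^o^nat} {t : R}.
Hypothesis bu : bounded_fun u.

Lemma limn_sup_lt_eventually : limn_sup u < t -> \forall n \near \oo, u n < t.
Proof.
rewrite limn_supE // => /inf_lt[]; first by exists (sups u 0%N), 0%N.
move=> _ [m _ <-] sups_lt; near=> n; apply: le_lt_trans sups_lt.
apply: ub_le_sup; first exact/has_ubound_sdrop/bounded_fun_has_ubound.
by exists n => //; near: n; apply: nbhs_infty_ge.
Unshelve. all: by end_near. Qed.

Lemma lt_limn_inf_eventually : t < limn_inf u -> \forall n \near \oo, t < u n.
Proof.
rewrite limn_infE // => /sup_gt[]; first by exists (infs u 0%N), 0%N.
move=> _ [m _ <-] lt_infs; near=> n; apply: lt_le_trans lt_infs _.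
apply: ge_inf; first exact/has_lbound_sdrop/bounded_fun_has_lbound.
by exists n => //; near: n; apply: nbhs_infty_ge.
Unshelve. all: by end_near. Qed.

Lemma limn_sup_gt_frequently : t < limn_sup u -> frequently (fun n => t < u n).
Proof.
rewrite limn_supE // => lt_sup M.
have /sup_gt[|_ [n Mn <-] ?] : t < sups u M; last by exists n.
- apply: (lt_le_trans lt_sup); apply: ge_inf; last by exists M.
  exact: bounded_fun_has_lbound_sups.
- by exists (u M); exists M => /=.
Qed.

Lemma limn_inf_lt_frequently : limn_inf u < t -> frequently (fun n => u n < t).
Proof.
rewrite limn_infE // => inf_lt_t M.
have /inf_lt[|_ [n Mn <-] ?] : infs u M < t; last by exists n.
- apply: le_lt_trans inf_lt_t; apply: ub_le_sup; last by exists M.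
  exact: bounded_fun_has_ubound_infs.
- by exists (u M); exists M => /=.
Qed.

End limn_sup_inf_bounds.

Lemma bounded_fun_le (R : realType) (u : R^o^nat) (B : R) :
  (forall n, `|u n| <= B) -> bounded_fun u.
Proof.
move=> uB; rewrite /bounded_near; near=> M => n _ /=; apply: le_trans (uB n) _.
by near: M; apply: nbhs_pinfty_ge; exact: num_real.
Unshelve. all: by end_near. Qed.

Section selection_averages.
Context {S : situation -> bool} {w : bpath}.

Lemma sel_countS n : sel_count S w n.+1 = (sel_count S w n + S (wprefix w n))%N.
Proof. by rewrite /sel_count big_ord_recr. Qed.

Lemma sel_count_homo : {homo sel_count S w : m n / (m <= n)%N}.
Proof.
apply: homo_leq => // [? ? ?|n]; first exact: leq_trans.
by rewrite sel_countS leq_addr.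
Qed.

Lemma sel_count_unbounded : frequently (fun n => S (wprefix w n)) ->
  forall M, exists n, (M <= sel_count S w n)%N.
Proof.
move=> S_often; elim=> [|M [n Mn]]; first by exists 0%N.
have [m nm Sm] := S_often n; exists m.+1.
by rewrite sel_countS Sm addn1 ltnS (leq_trans Mn) ?sel_count_homo.
Qed.

Context {R : realType}.
Implicit Types f g : situation -> R.

Lemma sel_avg_norm_le1 f : (forall s, 0 <= f s <= 1) -> forall n, `|sel_avg S w f n| <= 1.
Proof.
move=> f01 n; rewrite /sel_avg normrM normfV normr_nat.
have [->|cnt_gt0] := posnP (sel_count S w n); first by rewrite invr0 mulr0.
rewrite ler_pdivrMr ?ltr0n // mul1r /sel_count natr_sum.
apply: le_trans (ler_norm_sum _ _ _) (ler_sum _ _) => k _.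
rewrite normrM normr_nat; case: (S _); rewrite ?mul0r ?mul1r //.
have /andP[? ?] := f01 (wprefix w k).
by case: (w k); rewrite /= ler_norml; apply/andP; split; lra.
Qed.

Lemma sel_avg_bounded f : (forall s, 0 <= f s <= 1) -> bounded_fun (sel_avg S w f).
Proof. by move=> f01; apply: (@bounded_fun_le _ _ 1); exact: sel_avg_norm_le1. Qed.

Lemma sel_avg_gap_le f g e n : (forall s, S s -> g s + e <= f s) ->
  (0 < sel_count S w n)%N -> sel_avg S w f n + e <= sel_avg S w g n.
Proof.
move=> gap cnt_gt0; have cnt_pos : (0 : R) < (sel_count S w n)%:R by rewrite ltr0n.
rewrite /sel_avg -[e](mulfK (lt0r_neq0 cnt_pos)) -mulrDl ler_pM2r ?invr_gt0 //.
rewrite /sel_count natr_sum mulr_sumr -big_split /=; apply: ler_sum => k _.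
case Sk: (S _); rewrite /= ?mul0r ?mulr0 ?addr0 // !mul1r mulr1.
by have := gap _ Sk; lra.
Qed.

Lemma sel_avg_gap_absurd {f g} e : 0 < e ->
  (forall s, 0 <= f s <= 1) -> (forall s, 0 <= g s <= 1) ->
  (forall s, S s -> g s + e <= f s) ->
  (forall M, exists n, (M <= sel_count S w n)%N) ->
  0 <= limn_inf (sel_avg S w f) -> limn_sup (sel_avg S w g) <= 0 -> False.
Proof.
move=> e_gt0 f01 g01 gap cnt_unbounded inf_ge0 sup_le0.
have [n0 cnt_n0] := cnt_unbounded 1%N.
suff : \forall n \near \oo, False by case/filter_ex.
near=> n.
have cnt_gt0 : (0 < sel_count S w n)%N.
  by apply/(leq_trans cnt_n0)/sel_count_homo; near: n; apply: nbhs_infty_ge.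
have := @sel_avg_gap_le f g e n gap cnt_gt0.
have : - (e / 2) < sel_avg S w f n.
  by near: n; apply: lt_limn_inf_eventually; [exact: sel_avg_bounded | lra].
have : sel_avg S w g n < e / 2.
  by near: n; apply: limn_sup_lt_eventually; [exact: sel_avg_bounded | lra].
lra.
Unshelve. all: by end_near. Qed.

End selection_averages.

Lemma ilo_in01 {R : realType} (I : Defs.interval R) : 0 <= ilo I <= 1.
Proof. by rewrite ilo_ge0 (le_trans (ilo_le_ihi I) (ihi_le1 I)). Qed.

Lemma ihi_in01 {R : realType} (I : Defs.interval R) : 0 <= ihi I <= 1.
Proof. by rewrite ihi_le1 (le_trans (ilo_ge0 I) (ilo_le_ihi I)). Qed.

Lemma bounded_fun_flo {R : realType} (phi : forecasting_system R) (w : bpath) :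
  bounded_fun (fun n => flo phi (wprefix w n)).
Proof.
apply: (@bounded_fun_le _ _ 1) => n.
by have /andP[? ?] := ilo_in01 (phi (wprefix w n)); rewrite ger0_norm.
Qed.

Lemma exp2N_lt (R : realType) (d : R) : 0 < d -> exists N : nat, 2%:R ^- N < d.
Proof.
move=> d_gt0; exists (Num.bound d^-1).
rewrite invf_plt ?posrE ?exprn_gt0 ?ltr0n //.
apply: lt_trans (archi_boundP _) _; first by rewrite invr_ge0 ltW.
by rewrite -natrX ltr_nat ltn_expl.
Qed.

Lemma rat_between_exp2N (R : realType) (a b : R) : a < b ->
  exists N (r : rat), a + 2%:R ^- N < ratr r < b - 2%:R ^- N.
Proof.
move=> ab; have [N eN] : exists N : nat, 2%:R ^- N < (b - a) / 2 by apply: exp2N_lt; lra.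
have /rat_in_itvoo[r] : a + 2%:R ^- N < b - 2%:R ^- N by lra.
by rewrite in_itv /=; exists N, r.
Qed.

Lemma limn_sup_flo_le_ihi (R : realType) (phi : forecasting_system R) (w : bpath)
    (I : Defs.interval R) :
  computable_fs phi -> CH_random phi w -> CH_random (const_fs I) w ->
  limn_sup (fun n => flo phi (wprefix w n)) <= ihi I.
Proof.
move=> [ql [_ [ql_rec _ ql_approx _]]] phi_rand I_rand.
set L := limn_sup _; rewrite leNgt; apply/negP => /rat_between_exp2N[N [r]].
set e : R := 2%:R ^- N => /andP[r_gt r_lt].
have approx s : - e < flo phi s - ratr (ql s N) < e by rewrite -ltr_norml; apply: ql_approx.
pose S s := r < ql s N.
have S_rec : recursive_selection S :=
  recursive_selection_ltq (recursive_s_rat_const r) (recursive_sn_rat_at N ql_rec).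
have S_approx s : S s = (ratr r < ratr (ql s N) :> R) by rewrite ltr_rat.
have flo_often : frequently (fun n => ratr r + e < flo phi (wprefix w n)).
  by apply: (limn_sup_gt_frequently (bounded_fun_flo phi w)); rewrite -/L; lra.
have S_often : frequently (fun n => S (wprefix w n)).
  move=> M; have [n Mn flo_gt] := flo_often M; exists n => //.
  by rewrite S_approx; have /andP[] := approx (wprefix w n); lra.
have S_cnt := sel_count_unbounded S_often.
have [phi_ge0 _] := phi_rand S S_rec S_cnt; have [_ I_le0] := I_rand S S_rec S_cnt.
apply: (sel_avg_gap_absurd (ratr r - e - ihi I) _ _ _ _ S_cnt phi_ge0 I_le0).
- lra.
- by move=> s; apply: ilo_in01.
- by move=> s; apply: ihi_in01.
- by move=> s; rewrite S_approx /fhi /=; have /andP[] := approx s; lra.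
Qed.

Lemma ilo_le_limn_inf_flo (R : realType) (phi : forecasting_system R) (w : bpath)
    (I : Defs.interval R) :
  precise phi -> computable_fs phi -> CH_random phi w -> CH_random (const_fs I) w ->
  ilo I <= limn_inf (fun n => flo phi (wprefix w n)).
Proof.
move=> phi_precise [ql [_ [ql_rec _ ql_approx _]]] phi_rand I_rand.
set L := limn_inf _; rewrite leNgt; apply/negP => /rat_between_exp2N[N [r]].
set e : R := 2%:R ^- N => /andP[r_gt r_lt].
have approx s : - e < flo phi s - ratr (ql s N) < e by rewrite -ltr_norml; apply: ql_approx.
pose S s := ql s N < r.
have S_rec : recursive_selection S :=
  recursive_selection_ltq (recursive_sn_rat_at N ql_rec) (recursive_s_rat_const r).
have S_approx s : S s = (ratr (ql s N) < ratr r :> R) by rewrite ltr_rat.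
have flo_often : frequently (fun n => flo phi (wprefix w n) < ratr r - e).
  by apply: (limn_inf_lt_frequently (bounded_fun_flo phi w)); rewrite -/L; lra.
have S_often : frequently (fun n => S (wprefix w n)).
  move=> M; have [n Mn flo_lt] := flo_often M; exists n => //.
  by rewrite S_approx; have /andP[] := approx (wprefix w n); lra.
have S_cnt := sel_count_unbounded S_often.
have [_ phi_le0] := phi_rand S S_rec S_cnt; have [I_ge0 _] := I_rand S S_rec S_cnt.
apply: (sel_avg_gap_absurd (ilo I - (ratr r + e)) _ _ _ _ S_cnt I_ge0 phi_le0).
- lra.
- by move=> s; apply: ilo_in01.
- by move=> s; apply: ihi_in01.
- move=> s; rewrite S_approx /flo /= -[fhi phi s]phi_precise.
  by have /andP[] := approx s; lra.
Qed.

Theorem proposition16 (R : realType) (phi : forecasting_system R) (w : bpath) :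
  precise phi -> computable_fs phi -> CH_random phi w ->
  `[limn_inf (fun n => flo phi (wprefix w n)),
    limn_sup (fun n => flo phi (wprefix w n))] `<=` I_CH w.
Proof.
move=> phi_precise phi_comp phi_rand x /=; rewrite in_itv /= => /andP[inf_le_x x_le_sup].
move=> I I_rand; apply/andP; split.
- by rewrite (le_trans _ inf_le_x) // ilo_le_limn_inf_flo.
- by rewrite (le_trans x_le_sup) // limn_sup_flo_le_ihi.
Qed.
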